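(* Let $(p_n)$ be a scale and let $\mathbb{Z}_{(p_n)}$ be the odometer with scale $(p_n)$. Then the stabilized automorphism group $\operatorname{Aut}^{(\infty)}(\mathbb{Z}_{(p_n)},+\mathbf{1})$ is isomorphic (as a group) to the direct limit of a sequence of group monomorphisms $G_0\to G_1\to G_2\to\cdots$ in which each group $G_j$ is of the form $\left(\mathbb{Z}_{(q_n)}\right)^{p_k}\rtimes \operatorname{Sym}(p_k)$, where $\mathbb{Z}_{(q_n)}$ is an odometer that is a factor of $\mathbb{Z}_{(p_n)}$ and $p_k$ is a term of the scale $(p_n)$.
   Context: A scale is a sequence $(p_n)_{n\ge1}$ of positive integers with $p_n\mid p_{n+1}$ for all $n$; scales are assumed not eventually constant. The odometer with scale $(p_n)$ is the compact group $\mathbb{Z}_{(p_n)}=\{(x_n)\in\prod_{n\ge1}\mathbb{Z}/p_n\mathbb{Z} : x_{n+1}\equiv x_n \bmod p_n \text{ for all } n\}$ (product topology), with $\mathbf{1}=(1,1,1,\dots)$; the dynamical system $(\mathbb{Z}_{(p_n)},+\mathbf{1})$ is translation by $\mathbf{1}$. For a compact metric space $X$ and a homeomorphism $T$, $\operatorname{Aut}(X,T)$ is the group of homeomorphisms of $X$ commuting with $T$, and the stabilized automorphism group is $\operatorname{Aut}^{(\infty)}(X,T)=\bigcup_{n\ge1}\operatorname{Aut}(X,T^n)\subseteq\operatorname{Homeo}(X)$. A factor of $(\mathbb{Z}_{(p_n)},+\mathbf{1})$ is a system $(\mathbb{Z}_{(q_n)},+\mathbf{1})$ admitting a continuous surjection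 from $\mathbb{Z}_{(p_n)}$ intertwining the translations. $\operatorname{Sym}(n)$ is the symmetric group on $n$ symbols, and in $H^{n}\rtimes\operatorname{Sym}(n)$ the symmetric group acts by permuting coordinates. *)

From mathcomp Require Import all_boot all_fingroup.
Set Implicit Arguments. Unset Strict Implicit. Unset Printing Implicit Defensive.

(* A scale (p_n), indexed from n = 0 here (p 0 is the paper's p_1):
   positive integers, p_n | p_{n+1}, not eventually constant. *)
Record scale := Scale {
  sc :> nat -> nat;
  sc_pos : forall n, 0 < sc n;
  sc_dvd : forall n, sc n %| sc n.+1;
  sc_nec : ~ (exists N, forall n, N <= n -> sc n = sc N) }.

(* The odometer Z_(p_n): compatible sequences x_n in Z/p_n (represented by
   0 <= x_n < p_n) with x_{n+1} = x_n mod p_n. *)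
Definition odo_prop (p : scale) (x : nat -> nat) :=
  forall n, x n < p n /\ x n.+1 %% p n = x n.
Definition odo (p : scale) := {x : nat -> nat | odo_prop p x}.

Lemma odo_add_prop (p : scale) (x y : odo p) :
  odo_prop p (fun n => (proj1_sig x n + proj1_sig y n) %% p n).
Proof.
move=> n; split; first by rewrite ltn_pmod // sc_pos.
rewrite modn_dvdm ?sc_dvd //.
case: x y => x hx [y hy] /=.
by rewrite -modnDm (proj2 (hx n)) (proj2 (hy n)).
Qed.

Definition odo_add (p : scale) (x y : odo p) : odo p :=
  exist _ _ (odo_add_prop x y).

Lemma odo_one_prop (p : scale) : odo_prop p (fun n => 1 %% p n).
Proof.
move=> n; split; first by rewrite ltn_pmod // sc_pos.
by rewrite modn_dvdm ?sc_dvd.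
Qed.

Definition odo_one (p : scale) : odo p := exist _ _ (odo_one_prop p).

Definition odo_T (p : scale) (x : odo p) : odo p := odo_add x (odo_one p).

(* Continuity for the product topology (discrete factors): the preimage of
   each subbasic open set {y | y_n = a} is a neighbourhood of each of its
   points, i.e. contains a basic cylinder {y | y_i = x_i, i <= m}. *)
Definition odo_continuous (p q : scale) (f : odo p -> odo q) :=
  forall (x : odo p) (n : nat), exists m : nat, forall y : odo p,
    (forall i, i <= m -> proj1_sig y i = proj1_sig x i) ->
    proj1_sig (f y) n = proj1_sig (f x) n.

Definition odo_homeo (p : scale) (f : odo p -> odo p) :=
  odo_continuous f /\
  exists g : odo p -> odo p, odo_continuous g /\
    (forall x, g (f x) = x) /\ (forall x, f (g x) = x).

Definition in_aut (p : scale) (n : nat) (f : odo p -> odo p) :=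
  odo_homeo f /\ forall x, f (iter n (@odo_T p) x) = iter n (@odo_T p) (f x).

Definition in_stab_aut (p : scale) (f : odo p -> odo p) :=
  exists n, 0 < n /\ in_aut n f.

Definition is_factor (p q : scale) :=
  exists pi : odo p -> odo q,
    odo_continuous pi /\ (forall y, exists x, pi x = y) /\
    (forall x, pi (odo_T x) = odo_T (pi x)).

(* The semidirect product (Z_(q_n))^m x| Sym(m); Sym(m) acts by permuting
   coordinates: (a, s) * (b, t) = (i |-> a i + b (s i), s * t)
   (mathcomp's permutation product: (s * t) i = t (s i)). *)
Definition sdp (q : scale) (m : nat) := (('I_m -> odo q) * {perm 'I_m})%type.

Definition sdp_mul (q : scale) (m : nat) (g h : sdp q m) : sdp q m :=
  (fun i => odo_add (g.1 i) (h.1 (g.2 i)), (g.2 * h.2)%g).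

From HB Require Import structures.
From mathcomp Require Import all_boot all_fingroup ssralg zify boolp.
Set Implicit Arguments. Unset Strict Implicit. Unset Printing Implicit Defensive.
Import GRing.Theory.

(* A homeomorphism F commuting with T^n commutes with translation by every
   multiple of n, hence, by continuity, with translation by every element of
   the closure of nZ.  Since gcd(n, p_m) is eventually constant, say from
   m = j on, that closure contains the open subgroup p_j Z_(p_n) = {z | z_j = 0}.
   A bijection commuting with all translations by this subgroup permutes its
   p_j cosets and acts on each of them by a translation, i.e. it is the action
   of an element of (p_j Z_(p_n))^(p_j) x| Sym(p_j).  The subgroup p_j Z_(p_n)
   is the odometer of the scale (p_(n+j) / p_j)_n, a factor of Z_(p_n) by
   compactness.  These groups G_j act faithfully, G_j acts by maps that also
   commute with p_(j+1) Z_(p_n) and hence embeds into G_(j+1), and every element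
   of Aut^(oo) is realised in some G_j. *)

Notation digit x n := (proj1_sig x n).

Lemma dvdn_scale (p : scale) m n : m <= n -> p m %| p n.
Proof.
move/subnK <-; elim: (n - m) => [|k IH] //.
by rewrite addSn (dvdn_trans IH) ?sc_dvd.
Qed.

Lemma odo_mod_prop (p : scale) c : odo_prop p (fun n => c %% p n).
Proof. by move=> n; rewrite ltn_pmod ?sc_pos // modn_dvdm ?sc_dvd. Qed.

Section OdometerGroup.
Variable p : scale.
Local Notation X := (odo p).

Lemma digit_lt (x : X) n : digit x n < p n.
Proof. exact: (proj1 (proj2_sig x n)). Qed.

Lemma digitS (x : X) n : digit x n.+1 %% p n = digit x n.
Proof. exact: (proj2 (proj2_sig x n)). Qed.

Lemma digit_mod (x : X) m n : m <= n -> digit x n %% p m = digit x m.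
Proof.
move/subnK <-; elim: (n - m) => [|k IH]; first by rewrite modn_small ?digit_lt.
by rewrite addSn -(modn_dvdm _ (dvdn_scale p (leq_addl k m))) digitS.
Qed.

Lemma digit_eq_le (x y : X) m n :
  m <= n -> digit x n = digit y n -> digit x m = digit y m.
Proof. by move=> le_mn exy; rewrite -(digit_mod x le_mn) -(digit_mod y le_mn) exy. Qed.

Lemma odo_eq (x y : X) : (forall n, digit x n = digit y n) -> x = y.
Proof.
case: x y => x hx [y hy] /= /funext exy; subst y.
by congr exist; apply: Prop_irrelevance.
Qed.

Definition odo_zero : X := exist _ _ (odo_mod_prop p 0).

Lemma odo_opp_prop (x : X) : odo_prop p (fun n => (p n - digit x n) %% p n).
Proof.
have le_xp m : digit x m <= p m by exact/ltnW/digit_lt.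
move=> n; rewrite ltn_pmod ?sc_pos //; split=> //.
rewrite modn_dvdm ?sc_dvd //; apply/eqP; rewrite -(eqn_modDr (digit x n.+1)).
rewrite subnK // -modnDmr digitS subnK //.
by rewrite modnn; exact: sc_dvd.
Qed.

Definition odo_opp (x : X) : X := exist _ _ (odo_opp_prop x).

Lemma odo_addA : associative (@odo_add p).
Proof. by move=> x y z; apply: odo_eq => n /=; rewrite modnDmr modnDml addnA. Qed.

Lemma odo_addC : commutative (@odo_add p).
Proof. by move=> x y; apply: odo_eq => n /=; rewrite addnC. Qed.

Lemma odo_add0 : left_id odo_zero (@odo_add p).
Proof. by move=> x; apply: odo_eq => n /=; rewrite mod0n modn_small ?digit_lt. Qed.

Lemma odo_addN : left_inverse odo_zero odo_opp (@odo_add p).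
Proof.
move=> x; apply: odo_eq => n /=.
by rewrite modnDml subnK ?modnn ?mod0n // ltnW ?digit_lt.
Qed.

HB.instance Definition _ := gen_eqMixin X.
HB.instance Definition _ := gen_choiceMixin X.
HB.instance Definition _ :=
  GRing.isZmodule.Build X odo_addA odo_addC odo_add0 odo_addN.

Local Open Scope ring_scope.

Lemma digitD (x y : X) n : digit (x + y) n = ((digit x n + digit y n) %% p n)%N.
Proof. by []. Qed.

Lemma digit0 n : digit (0 : X) n = 0%N.
Proof. exact: mod0n. Qed.

Lemma digit_natmul c n : digit (odo_one p *+ c) n = (c %% p n)%N.
Proof.
elim: c => [|c IH]; first by rewrite mulr0n digit0 mod0n.
by rewrite mulrS digitD IH /= modnDm.
Qed.

Lemma digit_sub_eq0 (x y : X) n : digit x n = digit y n -> digit (x - y) n = 0%N.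
Proof.
move=> exy; rewrite digitD /= exy modnDmr subnKC ?modnn //.
exact: ltnW (digit_lt y n).
Qed.

Lemma digit_odo_T (x : X) n : digit (odo_T x) n = (digit x n).+1 %% p n.
Proof. by rewrite /= modnDmr addn1. Qed.

Lemma iter_odo_T n (x : X) : iter n (@odo_T p) x = x + odo_one p *+ n.
Proof. by elim: n => [|n IH] /=; rewrite ?mulr0n ?addr0 // IH mulrSr addrA. Qed.

End OdometerGroup.

Notation "n %:O" := (odo_one _ *+ n)%R
  (at level 2, left associativity, format "n %:O") : ring_scope.

Section Decomposition.
Variables (p : scale) (j : nat).
Local Notation X := (odo p).
Local Open Scope ring_scope.

Definition digit_ord (x : X) : 'I_(p j) := Ordinal (digit_lt x j).

Definition high_part (x : X) : X := x - (digit x j)%:O.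

Lemma digit_high_part x : digit (high_part x) j = 0%N.
Proof. by apply: digit_sub_eq0; rewrite digit_natmul modn_small ?digit_lt. Qed.

Lemma odo_decomp x : x = (digit x j)%:O + high_part x.
Proof. by rewrite addrC subrK. Qed.

Lemma digit_natmulD (l : nat) (w : X) :
  (l < p j)%N -> digit w j = 0%N -> digit (l%:O + w) j = l.
Proof. by move=> lt_lp w0; rewrite digitD digit_natmul w0 addn0 !modn_small. Qed.

Lemma digit_ordD (l : 'I_(p j)) (w : X) : digit w j = 0%N -> digit_ord (l%:O + w) = l.
Proof. by move=> w0; apply: val_inj; exact: digit_natmulD. Qed.

Lemma high_partD (l : nat) (w : X) :
  (l < p j)%N -> digit w j = 0%N -> high_part (l%:O + w) = w.
Proof. by move=> lt_lp w0; rewrite /high_part digit_natmulD // addrC addKr. Qed.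

Lemma digitD_eq0 (x z : X) : digit z j = 0%N -> digit (x + z) j = digit x j.
Proof. by move=> z0; rewrite digitD z0 addn0 modn_small ?digit_lt. Qed.

Lemma digit_ordD_eq0 (x z : X) : digit z j = 0%N -> digit_ord (x + z) = digit_ord x.
Proof. by move=> z0; apply: val_inj; exact: digitD_eq0. Qed.

Lemma high_partD_eq0 (x z : X) : digit z j = 0%N -> high_part (x + z) = high_part x + z.
Proof. by move=> z0; rewrite /high_part digitD_eq0 // addrAC. Qed.

End Decomposition.

Definition infinitely (A : nat -> Prop) := forall N0, exists2 N, N0 <= N & A N.

Lemma infinitely_sub (A B : nat -> Prop) :
  (forall N, A N -> B N) -> infinitely A -> infinitely B.
Proof. by move=> AB infA N0; have [N le_N /AB] := infA N0; exists N. Qed.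

Lemma infinitely_pigeonhole (A : nat -> Prop) (f : nat -> nat) K :
  infinitely A -> (forall N, A N -> f N < K) ->
  exists2 u, u < K & infinitely (fun N => A N /\ f N = u).
Proof.
elim: K A => [|K IH] A infA ltfK; first by have [N _ /ltfK] := infA 0.
have [infK|] := pselect (infinitely (fun N => A N /\ f N = K)); first by exists K.
move/existsNP=> [B noK].
have [|N [AN le_BN]|u ltuK infu] := IH (fun N => A N /\ B <= N).
- move=> N0; have [N] := infA (maxn N0 B); rewrite geq_max => /andP[le_N0 le_B] AN.
  by exists N.
- have := ltfK N AN; rewrite ltnS leq_eqVlt => /predU1P[fK|//].
  by case: noK; exists N.
- exists u; first exact: ltnW.
  by apply: infinitely_sub infu => N [[]].
Qed.

Lemma odo_cluster (p : scale) (z : nat -> odo p) :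
  exists x : odo p, forall m, infinitely (fun N => digit (z N) m = digit x m).
Proof.
pose often m u := infinitely (fun N => digit (z N) m = u).
have often_lt m u : often m u -> u < p m.
  by move=> /(_ 0) [N _ <-]; exact: digit_lt.
have often_step m u : often m u -> exists2 u', often m.+1 u' & u' %% p m = u.
  move=> oft.
  have [u' _ infu'] := infinitely_pigeonhole oft (fun N _ => digit_lt (z N) m.+1).
  exists u'; first by apply: infinitely_sub infu' => N [].
  by have [N _ [<- <-]] := infu' 0; rewrite digitS.
have infT : infinitely (fun=> True) by move=> N0; exists N0.
have [u0 _ often_u0] := infinitely_pigeonhole infT (fun N _ => digit_lt (z N) 0).
have /choice[next nextP] : forall mu : nat * nat, exists u', often mu.1 mu.2 ->
    often mu.1.+1 u' /\ u' %% p mu.1 = mu.2.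
  move=> [m u]; have [/often_step[u' oft' eq_u']|not_often] := pselect (often m u).
    by exists u'; split.
  by exists 0 => /not_often.
pose fix xs m := if m is m'.+1 then next (m', xs m') else u0.
have often_xs m : often m (xs m).
  elim: m => [|m IH]; first by apply: infinitely_sub often_u0 => N [].
  exact: (proj1 (nextP (m, xs m) IH)).
have xsP : odo_prop p xs.
  by move=> m; split; [exact: often_lt | exact: (proj2 (nextP (m, xs m) (often_xs m)))].
by exists (exist _ xs xsP).
Qed.

Section Subscale.
Variables (p : scale) (j : nat).

Definition subscale_fun n := p (n + j) %/ p j.

Lemma subscale_funK n : subscale_fun n * p j = p (n + j).
Proof. by rewrite divnK // dvdn_scale // leq_addl. Qed.

Lemma subscale_fun_gt0 n : 0 < subscale_fun n.
Proof. by rewrite divn_gt0 ?sc_pos // dvdn_leq ?sc_pos // dvdn_scale // leq_addl. Qed.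

Lemma subscale_fun_dvd n : subscale_fun n %| subscale_fun n.+1.
Proof. by rewrite -(dvdn_pmul2r (sc_pos p j)) !subscale_funK dvdn_scale // addSn. Qed.

Lemma subscale_fun_nec :
  ~ exists N, forall n, N <= n -> subscale_fun n = subscale_fun N.
Proof.
move=> [N const_N]; case: (@sc_nec p); exists (N + j) => n le_n.
have -> : n = (n - j) + j by lia.
by rewrite -(subscale_funK (n - j)) -(subscale_funK N) const_N //; lia.
Qed.

Definition subscale : scale := Scale subscale_fun_gt0 subscale_fun_dvd subscale_fun_nec.
Local Notation Y := (odo subscale).

Lemma subscaleK n : subscale n * p j = p (n + j).
Proof. exact: subscale_funK. Qed.

Lemma subscale_dvd n : subscale n %| p (n + j).
Proof. by rewrite -subscaleK dvdn_mulr. Qed.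

Local Notation X := (odo p).

Lemma mod_scale_low a b n : a = b %[mod p (n + j)] -> a = b %[mod p n].
Proof.
have dvd_p : p n %| p (n + j) by rewrite dvdn_scale // leq_addr.
by move=> eq_ab; rewrite -(modn_dvdm a dvd_p) -(modn_dvdm b dvd_p) eq_ab.
Qed.

Lemma muln_mod_subscale a n : p j * (a %% subscale n) = (p j * a) %% p (n + j).
Proof. by rewrite muln_modr (mulnC (p j) (subscale n)) subscaleK. Qed.

Lemma embed_sub_prop (y : Y) : odo_prop p (fun m => (p j * digit y m) %% p m).
Proof.
move=> m; rewrite ltn_pmod ?sc_pos //; split=> //.
rewrite modn_dvdm ?sc_dvd //; apply: mod_scale_low.
by rewrite -!muln_mod_subscale -(digitS y m) modn_mod.
Qed.

(* y |-> p_j y, an isomorphism onto the open subgroup {z | z_j = 0} of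
   Z_(p_n), inverted there by [proj_sub]. *)
Definition embed_sub (y : Y) : X := exist _ _ (embed_sub_prop y).

Lemma digit_embed_sub y n : digit (embed_sub y) (n + j) = p j * digit y n.
Proof. by rewrite /= -muln_mod_subscale digit_mod // leq_addr. Qed.

Lemma digit_embed_sub_j y : digit (embed_sub y) j = 0.
Proof. exact: modnMr. Qed.

Lemma embed_sub0 : embed_sub 0%R = 0%R.
Proof. by apply: odo_eq => n /=; rewrite mod0n muln0. Qed.

Lemma embed_subD : {morph embed_sub : y y' / (y + y')%R}.
Proof.
move=> y y'; apply: odo_eq => m; rewrite /= modnDm; apply: mod_scale_low.
by rewrite -mulnDr -[subscale_fun m]/(subscale m) muln_mod_subscale modn_mod.
Qed.

Lemma embed_sub_inj : injective embed_sub.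
Proof.
move=> y y' eq_y; apply: odo_eq => n; apply/eqP.
by rewrite -(eqn_pmul2l (sc_pos p j)) -!digit_embed_sub eq_y.
Qed.

Lemma proj_sub_prop (w : X) :
  odo_prop subscale (fun n => (digit w (n + j) %/ p j) %% subscale n).
Proof.
move=> n; rewrite ltn_pmod ?sc_pos //; split=> //.
rewrite modn_dvdm ?sc_dvd // !modn_divl !subscaleK.
by rewrite addSn digitS modn_small ?digit_lt.
Qed.

Definition proj_sub (w : X) : Y := exist _ _ (proj_sub_prop w).

Lemma proj_subK w : digit w j = 0 -> embed_sub (proj_sub w) = w.
Proof.
move=> w0; apply: odo_eq => m /=.
rewrite (@modn_small (_ %/ _)); last by rewrite ltn_divLR ?sc_pos // subscaleK digit_lt.
have dvd_w : p j %| digit w (m + j) by apply/eqP; rewrite digit_mod ?leq_addl.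
by rewrite mulnC divnK // digit_mod // leq_addr.
Qed.

Lemma reduce_sub_prop (x : X) : odo_prop subscale (fun n => digit x (n + j) %% subscale n).
Proof.
move=> n; rewrite ltn_pmod ?sc_pos //; split=> //.
by rewrite modn_dvdm ?sc_dvd // -(modn_dvdm _ (subscale_dvd n)) addSn digitS.
Qed.

Definition reduce_sub (x : X) : Y := exist _ _ (reduce_sub_prop x).

Lemma digit_reduce_sub x n : digit (reduce_sub x) n = digit x (n + j) %% subscale n.
Proof. by []. Qed.

Lemma reduce_sub_onto y : exists x, reduce_sub x = y.
Proof.
have [x cluster_x] := odo_cluster (fun N => (odo_one p *+ digit y N)%R).
exists x; apply: odo_eq => n; rewrite digit_reduce_sub.
have [N le_nN] := cluster_x (n + j) (n + j); rewrite digit_natmul => <-.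
by rewrite modn_dvdm ?subscale_dvd // (digit_mod y) // (leq_trans (leq_addr j n)).
Qed.

Lemma subscale_factor : is_factor p subscale.
Proof.
exists reduce_sub; split; [|split; first exact: reduce_sub_onto].
  by move=> x n; exists (n + j) => y /= ->.
move=> x; apply: odo_eq => n.
rewrite !digit_reduce_sub !digit_odo_T modn_dvdm ?subscale_dvd //.
by rewrite -(addn1 (digit x _)) -(addn1 (_ %% _)) modnDml.
Qed.

End Subscale.

Lemma nondecreasing_bounded_stable (g : nat -> nat) b :
  (forall n, g n <= b) -> {homo g : m n / m <= n} ->
  exists j, forall n, j <= n -> g n = g j.
Proof.
move=> le_gb homo_g.
have ex_g : exists d, `[< exists j, g j = d >] by exists (g 0); apply/asboolP; exists 0.
have ub_g d : `[< exists j, g j = d >] -> d <= b by move=> /asboolP[n <-].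
have [d /asboolP[j <-] max_gj] := ex_maxnP ex_g ub_g.
exists j => n le_jn; apply/eqP; rewrite eqn_leq (homo_g j n le_jn) andbT.
by apply: max_gj; apply/asboolP; exists n.
Qed.

Section Closure.
Variable p : scale.
Local Notation X := (odo p).
Local Open Scope ring_scope.

Lemma commute_closure (F : X -> X) (z : X) : odo_continuous F ->
  (forall M, exists2 w, (forall x, F (x + w) = F x + w) & digit w M = digit z M) ->
  forall x, F (x + z) = F x + z.
Proof.
move=> contF approx_z x; apply: odo_eq => N.
have [M near_xz] := contF (x + z) N.
have [w commF_w eq_wz] := approx_z (maxn M N).
have eq_wz_le i : (i <= maxn M N)%N -> digit w i = digit z i.
  by move=> le_i; exact: digit_eq_le le_i eq_wz.
rewrite -(near_xz (x + w)); last first.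
  by move=> i le_iM; rewrite !digitD eq_wz_le // leq_max le_iM.
by rewrite commF_w !digitD eq_wz_le // leq_max leqnn orbT.
Qed.

Lemma multiples_dense n : (0 < n)%N -> exists j, forall z : X, digit z j = 0%N ->
  forall M, exists c, digit ((n * c)%:O : X) M = digit z M.
Proof.
move=> n_gt0; pose g M := gcdn n (p M).
have [j stable_g] : exists j, forall M, (j <= M)%N -> g M = g j.
  apply: (nondecreasing_bounded_stable (b := n)) => [M|M M' le_MM'].
    exact/dvdn_leq/dvdn_gcdl.
  apply: dvdn_leq; first by rewrite gcdn_gt0 n_gt0.
  by rewrite dvdn_gcd dvdn_gcdl (dvdn_trans (dvdn_gcdr _ _)) ?dvdn_scale.
(* From j on, gcd(n, p_M) divides p_j, hence z_M, and Bezout solves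
   n c = z_M mod p_M. *)
exists j => z z0 M0; pose M := maxn M0 j.
have le_jM : (j <= M)%N by rewrite leq_maxr.
have dvd_gz : g M %| digit z M.
  rewrite stable_g // (dvdn_trans (dvdn_gcdr _ _)) //.
  by apply/eqP; rewrite digit_mod.
case: (egcdnP (p M) n_gt0) => km kn bezout _.
exists (km * (digit z M %/ g M)); apply: (digit_eq_le (leq_maxl M0 j)).
rewrite digit_natmul mulnA (mulnC n) bezout mulnDl -mulnA -/(g M) (mulnC (g M)) divnK //.
by rewrite mulnCA mulnC modnMDl modn_small ?digit_lt.
Qed.

Lemma aut_commute_natmul n (F : X -> X) : in_aut n F ->
  forall c x, F (x + (n * c)%:O) = F x + (n * c)%:O.
Proof.
move=> [_ commT] c; rewrite mulrnA.
elim: c => [|c IH] x; first by rewrite mulr0n !addr0.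
by rewrite mulrSr addrA -iter_odo_T commT IH iter_odo_T addrA.
Qed.

Lemma stab_aut_commute_sub (F : X -> X) : in_stab_aut F ->
  exists j, forall z : X, digit z j = 0%N -> forall x, F (x + z) = F x + z.
Proof.
move=> [n [n_gt0 autF]]; have [j dense_j] := multiples_dense n_gt0.
exists j => z z0; apply: commute_closure; first exact: (proj1 (proj1 autF)).
move=> M; have [c eq_c] := dense_j z z0 M.
by exists (n * c)%:O => //; exact: aut_commute_natmul.
Qed.

Lemma stab_aut_injective (F : X -> X) : in_stab_aut F -> injective F.
Proof. by move=> [_ [_ [[_ [G [_ [GK _]]]] _]]]; exact: can_inj GK. Qed.

End Closure.

Section SemidirectProduct.
Variables (q : scale) (m : nat).
Local Notation G := (sdp q m).
Local Open Scope ring_scope.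

Lemma sdp_mulE (g h : G) : sdp_mul g h = (fun i => g.1 i + h.1 (g.2 i), (g.2 * h.2)%g).
Proof. by []. Qed.

Definition sdp_one : G := (fun _ => 0, 1%g).

Definition sdp_inv (g : G) : G := (fun i => - g.1 ((g.2^-1)%g i), (g.2^-1)%g).

Lemma sdp_mulVg (g : G) : sdp_mul (sdp_inv g) g = sdp_one.
Proof.
by rewrite sdp_mulE; congr pair; [apply: funext => i /=; rewrite addNr | rewrite mulVg].
Qed.

Lemma sdp_mulgV (g : G) : sdp_mul g (sdp_inv g) = sdp_one.
Proof.
by rewrite sdp_mulE; congr pair; [apply: funext => i /=; rewrite permK addrN | rewrite mulgV].
Qed.

End SemidirectProduct.

Section Action.
Variables (p : scale) (j : nat).
Local Notation X := (odo p).
Local Notation G := (sdp (subscale p j) (p j)).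
Local Open Scope ring_scope.

(* Writing x = i + w with i < p_j and w_j = 0, (a, s) sends x to
   s^-1 i + p_j a (s^-1 i) + w. *)
Definition sdp_act (g : G) (x : X) : X :=
  let l := (g.2^-1)%g (digit_ord j x) in
  high_part j x + (l%:O + embed_sub (g.1 l)).

Lemma sdp_act_natmulD g (l : 'I_(p j)) (w : X) : digit w j = 0%N ->
  sdp_act g (l%:O + w) =
    w + ((((g.2^-1)%g l : nat))%:O + embed_sub (g.1 ((g.2^-1)%g l))).
Proof. by move=> w0; rewrite /sdp_act digit_ordD // high_partD. Qed.

Lemma sdp_actM g h x : sdp_act (sdp_mul g h) x = sdp_act g (sdp_act h x).
Proof.
case: g h => a s [b t]; rewrite {3}/sdp_act addrCA sdp_act_natmulD; last first.
  by rewrite digitD digit_high_part digit_embed_sub_j mod0n.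
rewrite /sdp_act sdp_mulE /= invMg permM permKV embed_subD.
(* Keep [addrA] from unfolding [high_part]. *)
set r := high_part j x.
by rewrite [RHS]addrAC -!addrA.
Qed.

Lemma sdp_act1 x : sdp_act (sdp_one _ _) x = x.
Proof. by rewrite /sdp_act /= invg1 perm1 embed_sub0 addr0 addrC -odo_decomp. Qed.

Lemma sdp_act_faithful g h : (forall x, sdp_act g x = sdp_act h x) -> g = h.
Proof.
case: g h => a s [b t] eq_act.
have eq_class i : ((s^-1)%g i : nat)%:O + embed_sub (a ((s^-1)%g i)) =
                  ((t^-1)%g i : nat)%:O + embed_sub (b ((t^-1)%g i)).
  by have := eq_act (i%:O + 0); rewrite !sdp_act_natmulD ?digit0 // !add0r.
have eq_inv : (s^-1)%g = (t^-1)%g.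
  apply/permP => i; apply: ord_inj.
  have := digit_natmulD (ltn_ord ((s^-1)%g i)) (digit_embed_sub_j (a ((s^-1)%g i))).
  by rewrite eq_class digit_natmulD ?digit_embed_sub_j.
have eq_st : s = t by rewrite -(invgK s) eq_inv invgK.
subst t; congr pair; apply: funext => l; apply: embed_sub_inj.
by have := eq_class (s l); rewrite permK => /addrI.
Qed.

Lemma sdp_act_continuous g : odo_continuous (sdp_act g).
Proof.
move=> x n; exists (maxn n j) => y eq_yx.
have eq_j : digit y j = digit x j by apply: eq_yx; rewrite leq_maxr.
have eq_n : digit y n = digit x n by apply: eq_yx; rewrite leq_maxl.
have eq_ord : digit_ord j y = digit_ord j x by apply: val_inj.
by rewrite /sdp_act eq_ord !digitD eq_j eq_n.
Qed.

Lemma sdp_act_commute_sub g (z : X) : digit z j = 0%N ->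
  forall x, sdp_act g (x + z) = sdp_act g x + z.
Proof. by move=> z0 x; rewrite /sdp_act digit_ordD_eq0 // high_partD_eq0 // addrAC. Qed.

Lemma sdp_act_stab_aut g : in_stab_aut (sdp_act g).
Proof.
exists (p j); split; first exact: sc_pos.
split; last by move=> x; rewrite !iter_odo_T sdp_act_commute_sub // digit_natmul modnn.
split; first exact: sdp_act_continuous.
exists (sdp_act (sdp_inv g)); split; first exact: sdp_act_continuous.
by split=> x; rewrite -sdp_actM ?sdp_mulVg ?sdp_mulgV sdp_act1.
Qed.

Lemma sdp_act_injective g : injective (sdp_act g).
Proof.
by move=> x y /(congr1 (sdp_act (sdp_inv g))); rewrite -!sdp_actM sdp_mulVg !sdp_act1.
Qed.

Lemma sdp_act_onto (F : X -> X) : injective F ->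
  (forall z : X, digit z j = 0%N -> forall x, F (x + z) = F x + z) ->
  exists g : G, forall x, sdp_act g x = F x.
Proof.
move=> injF commF.
pose sigma (i : 'I_(p j)) := digit_ord j (F i%:O).
have sigma_inj : injective sigma.
  move=> i i' eq_sigma.
  have eq_digit : digit (F i'%:O) j = digit (F i%:O) j by have := congr1 val eq_sigma.
  have w0 := digit_sub_eq0 eq_digit.
  have := commF _ w0 i%:O; rewrite subrKC => /injF/(congr1 (fun x => digit x j)).
  by rewrite digit_natmulD // digit_natmul modn_small // => /ord_inj.
pose s := ((perm sigma_inj)^-1)%g.
exists (fun l => proj_sub j (high_part j (F (s l)%:O)), s) => x.
rewrite /sdp_act /= invgK permE proj_subK ?digit_high_part //.
have -> : s (sigma (digit_ord j x)) = digit_ord j x by rewrite /s -[sigma _]permE permK.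
by rewrite -odo_decomp addrC -commF ?digit_high_part // -odo_decomp.
Qed.

End Action.

Lemma sdp_act_lift (p : scale) j (g : sdp (subscale p j) (p j)) :
  exists g' : sdp (subscale p j.+1) (p j.+1), forall x, sdp_act g' x = sdp_act g x.
Proof.
apply: sdp_act_onto; first exact: sdp_act_injective.
move=> z z0; apply: sdp_act_commute_sub.
by rewrite -(digit_mod z (leqnSn j)) z0 mod0n.
Qed.

Theorem theorem1p1 (p : scale) :
  exists (q : nat -> scale) (k : nat -> nat),
    (forall j, is_factor p (q j)) /\
    exists (f : forall j, sdp (q j) (p (k j)) -> sdp (q j.+1) (p (k j.+1)))
           (psi : forall j, sdp (q j) (p (k j)) -> odo p -> odo p),
      (forall j, injective (f j) /\
         forall g h, f j (sdp_mul g h) = sdp_mul (f j g) (f j h)) /\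
      (forall j,
         (forall g h, (forall x, psi j g x = psi j h x) -> g = h) /\
         (forall g h x, psi j (sdp_mul g h) x = psi j g (psi j h x)) /\
         (forall g, in_stab_aut (psi j g))) /\
      (forall j g x, psi j.+1 (f j g) x = psi j g x) /\
      (forall F : odo p -> odo p, in_stab_aut F ->
         exists j g, forall x, psi j g x = F x).
Proof.
exists (subscale p), (fun j => j); split; first exact: subscale_factor.
pose f j (g : sdp (subscale p j) (p j)) := projT1 (cid (sdp_act_lift g)).
have fP j g x : sdp_act (f j g) x = sdp_act g x := projT2 (cid (sdp_act_lift g)) x.
exists f, (@sdp_act p); split; [|split; [|split]].
- move=> j; split=> [g h eq_fgh | g h]; apply: sdp_act_faithful => x.
    by rewrite -fP eq_fgh fP.
  by rewrite fP !sdp_actM !fP.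
- move=> j; split; first exact: sdp_act_faithful.
  by split; [exact: sdp_actM | exact: sdp_act_stab_aut].
- exact: fP.
- move=> F stabF; have [j commF] := stab_aut_commute_sub stabF.
  have [g actF] := sdp_act_onto (stab_aut_injective stabF) commF.
  by exists j, g.
Qed.
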